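(* Let $M>0$, $q,Q,\alpha,\beta\in\mathbb{R}$, let $\mathbf{n}\in\mathbb{R}^3$ be a constant unit vector, and let $U=\{\mathbf{x}\in\mathbb{R}^3\setminus\{0\}:\alpha\,\mathbf{x}\cdot\mathbf{n}+\beta>0\}$. On $\{(\mathbf{x},\boldsymbol{\Pi}):\mathbf{x}\in U,\ \boldsymbol{\Pi}\in\mathbb{R}^3\}$ consider the bracket $$\{P,R\}=\sum_i\Big(\frac{\partial P}{\partial x^i}\frac{\partial R}{\partial \Pi_i}-\frac{\partial P}{\partial \Pi_i}\frac{\partial R}{\partial x^i}\Big)+q\sum_{i,j}F_{ij}\frac{\partial P}{\partial \Pi_i}\frac{\partial R}{\partial \Pi_j},\qquad F_{ij}=\epsilon_{ijk}B^k,$$ where $\mathbf{B}(\mathbf{x})=\dfrac{\alpha}{\sqrt{\alpha\,\mathbf{x}\cdot\mathbf{n}+\beta}}\,\mathbf{n}$. Let $$H=\frac{\boldsymbol{\Pi}^2}{2M}+\frac{qQ}{r},\qquad r=|\mathbf{x}|,\qquad \mathbf{L}=\mathbf{x}\times\boldsymbol{\Pi},\qquad \mathbf{K}_2=\boldsymbol{\Pi}\times\mathbf{L}+MqQ\,\frac{\mathbf{x}}{r}.$$ Then the function $$K=\mathbf{n}\cdot\Big[\mathbf{K}_2+2q\sqrt{\alpha\,\mathbf{x}\cdot\mathbf{n}+\beta}\;\mathbf{L}\Big]+\alpha q^2\,(\mathbf{x}\times\mathbf{n})^2$$ satisfies $\{K,H\}=0$ identically.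
   Context: $\epsilon_{ijk}$ is the Levi-Civita symbol and indices are raised and lowered with the Euclidean metric $\delta_{ij}$. The variables $\Pi_i$ are the gauge-covariant (kinetic) momenta and the bracket above is the gauge-covariant Poisson bracket ($\{\Pi_i,\Pi_j\}=qF_{ij}$). This models a charge $q$ of mass $M$ in the Coulomb potential of a charge $Q$ superposed with a magnetic field directed along the fixed vector $\mathbf{n}$. *)

From Stdlib Require Import Reals.
Open Scope R_scope.

(* Vectors of R^3 are represented as functions nat -> R; only the
   components 0,1,2 are meaningful (all sums below range over 0,1,2). *)
Definition vec := nat -> R.

Definition sum3 (f : nat -> R) : R := f 0%nat + f 1%nat + f 2%nat.

Definition eps (i j k : nat) : R :=
  match i, j, k with
  | 0%nat, 1%nat, 2%nat => 1 | 1%nat, 2%nat, 0%nat => 1 | 2%nat, 0%nat, 1%nat => 1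
  | 0%nat, 2%nat, 1%nat => -1 | 2%nat, 1%nat, 0%nat => -1 | 1%nat, 0%nat, 2%nat => -1
  | _, _, _ => 0
  end.

Definition dot (a b : vec) : R := sum3 (fun i => a i * b i).
Definition cross (a b : vec) : vec :=
  fun i => sum3 (fun j => sum3 (fun k => eps i j k * a j * b k)).
Definition vadd (a b : vec) : vec := fun i => a i + b i.
Definition vscal (c : R) (a : vec) : vec := fun i => c * a i.

Definition upd (x : vec) (i : nat) (t : R) : vec :=
  fun j => if Nat.eqb j i then t else x j.

Definition is_grad (P : vec -> vec -> R) (x Pi gx gP : vec) : Prop :=
  forall i : nat, (i < 3)%nat ->
    derivable_pt_lim (fun t => P (upd x i t) Pi) (x i) (gx i) /\
    derivable_pt_lim (fun t => P x (upd Pi i t)) (Pi i) (gP i).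

Definition Bfield (alpha beta : R) (n x : vec) : vec :=
  vscal (alpha / sqrt (alpha * dot x n + beta)) n.

Definition Fmag (alpha beta : R) (n x : vec) (i j : nat) : R :=
  sum3 (fun k => eps i j k * Bfield alpha beta n x k).

Definition bracket (q alpha beta : R) (n x : vec)
    (dPx dPP dRx dRP : vec) : R :=
  sum3 (fun i => dPx i * dRP i - dPP i * dRx i)
  + q * sum3 (fun i => sum3 (fun j =>
          Fmag alpha beta n x i j * dPP i * dRP j)).

Definition rad (x : vec) : R := sqrt (dot x x).

Definition Ham (M q Q : R) (x Pi : vec) : R :=
  dot Pi Pi / (2 * M) + q * Q / rad x.

Definition Lang (x Pi : vec) : vec := cross x Pi.

Definition K2 (M q Q : R) (x Pi : vec) : vec :=
  vadd (cross Pi (Lang x Pi)) (vscal (M * q * Q / rad x) x).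

Definition Kfun (M q Q alpha beta : R) (n : vec) (x Pi : vec) : R :=
  dot n (vadd (K2 M q Q x Pi)
              (vscal (2 * q * sqrt (alpha * dot x n + beta)) (Lang x Pi)))
  + alpha * q ^ 2 * dot (cross x n) (cross x n).

Definition inU (alpha beta : R) (n x : vec) : Prop :=
  ~ (x 0%nat = 0 /\ x 1%nat = 0 /\ x 2%nat = 0) /\ alpha * dot x n + beta > 0.

(* Write s = sqrt (alpha x.n + beta), so that B = (alpha / s) n.  The bracket
   {K, H} cancels in three pairs.  The Runge-Lenz part n.K2 commutes with H for
   the free bracket, exactly as in the pure Coulomb problem.  The x-gradient of
   2 q s n.L (through s) contributes (alpha q / (M s)) (n.Pi) n.(x * Pi), which
   the magnetic term of n.K2 cancels.  The magnetic term of 2 q s n.L,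
   (2 alpha q^2 / M) ((n.x)(n.Pi) - (n.n)(x.Pi)), is cancelled by the free
   bracket of alpha q^2 (x * n)^2.  Neither the unit length of n nor the sign of
   M plays any role; only M <> 0 is needed. *)

From Stdlib Require Import Reals Lra Lia.
From Coquelicot Require Import Coquelicot.
Open Scope R_scope.

Lemma dot_self_pos (x : vec) :
  ~ (x 0%nat = 0 /\ x 1%nat = 0 /\ x 2%nat = 0) -> 0 < dot x x.
Proof.
  intros Hx; destruct (Rlt_or_le 0 (dot x x)) as [H|H]; [exact H|].
  exfalso; apply Hx; unfold dot, sum3 in H; repeat split; nra.
Qed.

Lemma rad_sqr (x : vec) : 0 <= dot x x -> rad x ^ 2 = dot x x.
Proof. intros H; unfold rad; rewrite <- Rsqr_pow2; exact (Rsqr_sqrt _ H). Qed.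

Lemma is_grad_unique (P : vec -> vec -> R) (x Pi gx gP gx' gP' : vec) :
  is_grad P x Pi gx gP -> is_grad P x Pi gx' gP' ->
  forall i, (i < 3)%nat -> gx' i = gx i /\ gP' i = gP i.
Proof.
  intros G G' i Hi; destruct (G i Hi), (G' i Hi).
  split; eapply uniqueness_limite; eassumption.
Qed.

Lemma bracket_grad_invariant (q alpha beta : R) (n : vec) {x Pi : vec}
    {P R : vec -> vec -> R} {dPx dPP dRx dRP dPx' dPP' dRx' dRP' : vec} :
  is_grad P x Pi dPx dPP -> is_grad P x Pi dPx' dPP' ->
  is_grad R x Pi dRx dRP -> is_grad R x Pi dRx' dRP' ->
  bracket q alpha beta n x dPx' dPP' dRx' dRP' = bracket q alpha beta n x dPx dPP dRx dRP.
Proof.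
  intros GP GP' GR GR'; unfold bracket, sum3.
  destruct (is_grad_unique _ _ _ _ _ _ _ GP GP' 0) as [-> ->]; [lia|].
  destruct (is_grad_unique _ _ _ _ _ _ _ GP GP' 1) as [-> ->]; [lia|].
  destruct (is_grad_unique _ _ _ _ _ _ _ GP GP' 2) as [-> ->]; [lia|].
  destruct (is_grad_unique _ _ _ _ _ _ _ GR GR' 0) as [-> ->]; [lia|].
  destruct (is_grad_unique _ _ _ _ _ _ _ GR GR' 1) as [-> ->]; [lia|].
  destruct (is_grad_unique _ _ _ _ _ _ _ GR GR' 2) as [-> ->]; [lia|].
  reflexivity.
Qed.

Section ExplicitGradients.

Variables (M q Q alpha beta : R) (n x Pi : vec).

Definition Kgrad_x (i : nat) : R :=
  n i * dot Pi Pi - dot n Pi * Pi i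
  + M * q * Q * (n i / rad x - dot n x * x i / rad x ^ 3)
  + alpha * q / sqrt (alpha * dot x n + beta) * n i * dot n (cross x Pi)
  + 2 * q * sqrt (alpha * dot x n + beta) * cross Pi n i
  + 2 * alpha * q ^ 2 * (dot n n * x i - dot x n * n i).

Definition Kgrad_P (i : nat) : R :=
  2 * dot n x * Pi i - dot x Pi * n i - dot n Pi * x i
  + 2 * q * sqrt (alpha * dot x n + beta) * cross n x i.

Definition Hgrad_x (i : nat) : R := - (q * Q * x i / rad x ^ 3).

Definition Hgrad_P (i : nat) : R := Pi i / M.

End ExplicitGradients.

Ltac domain_conditions :=
  repeat match goal with
  | |- _ /\ _ => split
  | |- True => exact I
  | |- sqrt _ <> 0 => apply Rgt_not_eq, sqrt_lt_R0
  | |- _ => lra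
  end.

Ltac solve_grad_component :=
  apply is_derive_Reals;
  unfold Kfun, Ham, K2, Lang, vadd, vscal, rad, cross, dot, sum3, upd, eps; simpl;
  auto_derive;
  [ domain_conditions
  | unfold Kgrad_x, Kgrad_P, Hgrad_x, Hgrad_P, rad, cross, dot, sum3, eps; simpl;
    field; domain_conditions ].

Lemma Ham_is_grad (M q Q : R) (x Pi : vec) :
  M <> 0 -> 0 < dot x x -> is_grad (Ham M q Q) x Pi (Hgrad_x q Q x) (Hgrad_P M Pi).
Proof.
  unfold dot, sum3; intros HM Hr i Hi.
  destruct i as [|[|[|i]]]; [..|lia]; split; solve_grad_component.
Qed.

Lemma Kfun_is_grad (M q Q alpha beta : R) (n x Pi : vec) :
  0 < dot x x -> 0 < alpha * dot x n + beta ->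
  is_grad (Kfun M q Q alpha beta n) x Pi
    (Kgrad_x M q Q alpha beta n x Pi) (Kgrad_P q alpha beta n x Pi).
Proof.
  unfold dot, sum3; intros Hr Hs i Hi.
  destruct i as [|[|[|i]]]; [..|lia]; split; solve_grad_component.
Qed.

Lemma bracket_Kgrad_Hgrad (M q Q alpha beta : R) (n x Pi : vec) :
  M <> 0 -> 0 < dot x x -> 0 < alpha * dot x n + beta ->
  bracket q alpha beta n x
    (Kgrad_x M q Q alpha beta n x Pi) (Kgrad_P q alpha beta n x Pi)
    (Hgrad_x q Q x) (Hgrad_P M Pi) = 0.
Proof.
  intros HM Hr Hs.
  assert (Hs0 : sqrt (alpha * dot x n + beta) <> 0) by (apply Rgt_not_eq, sqrt_lt_R0; lra).
  assert (Hr0 : rad x <> 0) by (apply Rgt_not_eq, sqrt_lt_R0; lra).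
  assert (Hr2 := rad_sqr x (Rlt_le _ _ Hr)).
  unfold bracket, Fmag, Bfield, Kgrad_x, Kgrad_P, Hgrad_x, Hgrad_P, vscal.
  unfold cross, dot, sum3, eps in *; simpl.
  field_simplify; [ | auto ..].
  rewrite Hr2; unfold Rdiv; ring.
Qed.

Theorem mainTheorem3 (M q Q alpha beta : R) (n : vec)
  (hM : 0 < M) (hn : dot n n = 1) :
  forall x Pi : vec, inU alpha beta n x ->
    (exists gx gP, is_grad (Kfun M q Q alpha beta n) x Pi gx gP) /\
    (exists gx gP, is_grad (Ham M q Q) x Pi gx gP) /\
    (forall dKx dKP dHx dHP,
        is_grad (Kfun M q Q alpha beta n) x Pi dKx dKP ->
        is_grad (Ham M q Q) x Pi dHx dHP ->
        bracket q alpha beta n x dKx dKP dHx dHP = 0).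
Proof.
  intros x Pi [Hx0 Hs].
  pose proof (dot_self_pos x Hx0) as Hr.
  assert (HM : M <> 0) by lra.
  pose proof (Kfun_is_grad M q Q alpha beta n x Pi Hr Hs) as GK.
  pose proof (Ham_is_grad M q Q x Pi HM Hr) as GH.
  split; [eauto | split; [eauto |]].
  intros dKx dKP dHx dHP GK' GH'.
  rewrite (bracket_grad_invariant q alpha beta n GK GK' GH GH').
  exact (bracket_Kgrad_Hgrad M q Q alpha beta n x Pi HM Hr Hs).
Qed.
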